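(* Let $(\bm{W}_0,\bm{D}_0,f_{0,j}:j=1,\ldots,p)$ and $(\bm{W}_1,\bm{D}_0,f_{1,j}:j=1,\ldots,p)$ be two parameter values of the model in the context, sharing the same diagonal matrix $\bm{D}_0$, such that they generate the same distribution of $\bm{Y}_t$. If $\bm{W}_0$ is strictly lower triangular and $\bm{W}_1$ has all diagonal entries zero, then $\bm{W}_0=\bm{W}_1$.
   Context: Model: a $p$-dimensional time series $(\bm{Y}_t)$ satisfies $\bm{Y}_t-\bm{W}\bm{Y}_t=\bm{D}^{1/2}\bm{Z}_t$, where $\bm{W}$ is a $p\times p$ matrix with $\bm{I}-\bm{W}$ invertible, $\bm{D}$ is a diagonal matrix with positive diagonal entries, and $(\bm{Z}_t)$ is a zero-mean stationary Gaussian process whose $p$ components are mutually independent univariate stationary series with unit variance and spectral densities $f_1,\ldots,f_p$. *)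

From HB Require Import structures.
From mathcomp Require Import all_boot all_order all_algebra.
From mathcomp Require Import all_classical all_reals all_analysis.
Set Implicit Arguments. Unset Strict Implicit. Unset Printing Implicit Defensive.
Import Order.TTheory GRing.Theory Num.Theory.
Import numFieldNormedType.Exports.
Local Open Scope classical_set_scope.
Local Open Scope ring_scope.

Section Model.
Variable R : realType.

Definition freq_dom : set R := `[(- pi)%R, pi]%classic.

(* f is the spectral density of a real, zero-mean, stationary univariate
   series with unit variance: nonnegative, even, Lebesgue integrable on
   [-pi,pi], with total mass 1 (= variance gamma(0)). *)
Definition is_unit_spec_density (f : R -> R) : Prop :=
  [/\ measurable_fun freq_dom f,
      (@lebesgue_measure R).-integrable freq_dom (EFin \o f),
      (forall w, 0 <= f w),
      (forall w, f (- w) = f w) &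
      Rintegral (@lebesgue_measure R) freq_dom f = 1].

(* Autocovariance at lag h of the series with spectral density f:
   gamma(h) = \int_{-pi}^{pi} e^{i h w} f(w) dw = \int_{-pi}^{pi} cos(h w) f(w) dw. *)
Definition acvf (f : R -> R) (h : int) : R :=
  Rintegral (@lebesgue_measure R) freq_dom (fun w => cos (h%:~R * w) * f w).

Variable p : nat.

Definition diag_sqrt (D : 'M[R]_p) : 'M[R]_p :=
  \matrix_(i, j) (if i == j then Num.sqrt (D i i) else 0).

(* Admissible parameter value (W, D, f_1..f_p) of the model
   Y_t - W Y_t = D^{1/2} Z_t. *)
Definition model_param (W D : 'M[R]_p) (f : 'I_p -> R -> R) : Prop :=
  [/\ (1%:M - W) \in unitmx,
      (forall i j : 'I_p, i != j -> D i j = 0),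
      (forall i : 'I_p, 0 < D i i) &
      (forall j : 'I_p, is_unit_spec_density (f j))].

(* Y_t = (I - W)^{-1} D^{1/2} Z_t. *)
Definition mix_mx (W D : 'M[R]_p) : 'M[R]_p := invmx (1%:M - W) *m diag_sqrt D.

(* Autocovariance matrix of Y at lag h: Cov(Y_{t+h}, Y_t) = A diag(gamma_j(h)) A^T,
   using mutual independence of the components of Z. *)
Definition acvfY (W D : 'M[R]_p) (f : 'I_p -> R -> R) (h : int) : 'M[R]_p :=
  mix_mx W D *m diag_mx (\row_j acvf (f j) h) *m (mix_mx W D)^T.

(* Since Y is a zero-mean stationary Gaussian process, its distribution
   (all finite-dimensional laws) is determined by, and determines, its
   autocovariance function. *)
Definition same_distribution (W0 D0 : 'M[R]_p) (f0 : 'I_p -> R -> R)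
    (W1 D1 : 'M[R]_p) (f1 : 'I_p -> R -> R) : Prop :=
  forall h : int, acvfY W0 D0 f0 h = acvfY W1 D1 f1 h.

End Model.

(* At lag 0 every unit-mass spectral density has autocovariance 1, so the
   lag-0 autocovariance of Y is A A^T with A = (I - W)^{-1} D^{1/2}.  Hence
   the unmixing matrices Q_k = D^{-1/2} (I - W_k) satisfy Q_1 = P Q_0 for an
   orthogonal P.  Q_0 is lower triangular and, both W's having zero diagonal,
   Q_1 has the same diagonal as Q_0.  Reading the diagonal of Q_1 = P Q_0 from
   the last index upwards forces the columns of P to be unit vectors one after
   the other, so P = I and W_0 = W_1. *)

From mathcomp Require Import all_boot all_order all_algebra.
From mathcomp Require Import all_classical all_reals all_analysis.
From mathcomp Require Import zify.
Set Implicit Arguments.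
Unset Strict Implicit.
Unset Printing Implicit Defensive.

Import Order.TTheory GRing.Theory Num.Theory.
Local Open Scope ring_scope.

Lemma gram_eq_orthogonal_factor (R : comUnitRingType) n (A0 A1 Q0 Q1 : 'M[R]_n) :
  Q0 *m A0 = 1%:M -> Q1 *m A1 = 1%:M -> A0 *m A0^T = A1 *m A1^T ->
  exists2 P : 'M[R]_n, P^T *m P = 1%:M & Q1 = P *m Q0.
Proof.
move=> Q0A0 Q1A1 gramA; exists (Q1 *m A0).
  apply: mulmx1C; rewrite trmx_mul mulmxA -(mulmxA Q1) gramA.
  by rewrite mulmxA Q1A1 mul1mx -trmx_mul Q1A1 trmx1.
by rewrite -mulmxA (mulmx1C Q0A0) mulmx1.
Qed.

Section OrthogonalTriangular.
Variables (R : realDomainType) (n : nat) (P : 'M[R]_n).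
Hypothesis P_orth : P^T *m P = 1%:M.

Lemma orthogonal_col_unit k : P k k = 1 -> forall j, j != k -> P j k = 0.
Proof.
move=> Pkk j neq_jk.
have /eqP := congr1 (fun M : 'M[R]_n => M k k) P_orth.
rewrite !mxE eqxx (bigD1 k) //= mxE Pkk mul1r -[X in _ == X]addr0.
move=> /eqP/addrI sq0.
have /eqP : P^T k j * P j k = 0.
  by apply: (psumr_eq0P _ sq0) => // i _; rewrite mxE -expr2 sqr_ge0.
by rewrite mxE mulf_eq0 orbb => /eqP.
Qed.

Lemma orthogonal_trig_diag_eq1 (L : 'M[R]_n) :
  is_trig_mx L -> (forall i, L i i != 0) ->
  (forall i, (P *m L) i i = L i i) -> P = 1%:M.
Proof.
move=> /is_trig_mxP L_trig L_diag PL_diag.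
suff diag1 i : P i i = 1.
  apply/matrixP => i j; rewrite !mxE.
  have [->|neq_ij] := eqVneq i j; first by rewrite diag1.
  exact: orthogonal_col_unit.
have [m] := ubnP (n - i); elim: m i => // m IH i lt_m.
have := PL_diag i; rewrite mxE (bigD1 i) //= big1 ?addr0.
  by rewrite -[RHS]mul1r => /(mulIf (L_diag i)).
move=> j neq_ji; have [lt_ji|lt_ij|eq_ij] := ltngtP j i.
- by rewrite L_trig ?mulr0.
- rewrite (orthogonal_col_unit (IH j _)) ?mul0r //; last by rewrite eq_sym.
  by move: lt_m (ltn_ord j); lia.
- by move: neq_ji; rewrite (val_inj eq_ij) eqxx.
Qed.

End OrthogonalTriangular.

Section Model.
Variables (R : realType) (p : nat).

Lemma acvf0 (f : R -> R) : is_unit_spec_density f -> acvf f 0 = 1.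
Proof.
case=> _ _ _ _ mass1; rewrite /acvf -[RHS]mass1; congr Rintegral.
by apply/funext => w; rewrite mulr0z mul0r cos0 mul1r.
Qed.

Lemma acvfY0 (W D : 'M[R]_p) f : model_param W D f ->
  acvfY W D f 0 = mix_mx W D *m (mix_mx W D)^T.
Proof.
case=> _ _ _ f_dens; rewrite /acvfY.
have -> : \row_j acvf (f j) 0 = const_mx 1 :> 'rV[R]_p.
  by apply/matrixP => i j; rewrite !mxE (acvf0 (f_dens j)).
by rewrite diag_const_mx mulmx1.
Qed.

Definition diag_invsqrt (D : 'M[R]_p) : 'M[R]_p :=
  diag_mx (\row_i (Num.sqrt (D i i))^-1).

Lemma diag_sqrtE (D : 'M[R]_p) : diag_sqrt D = diag_mx (\row_i Num.sqrt (D i i)).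
Proof.
by apply/matrixP => i j; rewrite !mxE; case: eqVneq => [->|]; rewrite ?mulr1n ?mulr0n.
Qed.

Lemma diag_sqrtK (D : 'M[R]_p) : (forall i, 0 < D i i) ->
  diag_sqrt D *m diag_invsqrt D = 1%:M.
Proof.
move=> D_pos; rewrite diag_sqrtE mulmx_diag -diag_const_mx; congr diag_mx.
by apply/matrixP => i j; rewrite !mxE divff // gt_eqF // sqrtr_gt0.
Qed.

Definition unmix_mx (W D : 'M[R]_p) : 'M[R]_p := diag_invsqrt D *m (1%:M - W).

Lemma unmix_mxE (W D : 'M[R]_p) i j :
  unmix_mx W D i j = (Num.sqrt (D i i))^-1 * ((i == j)%:R - W i j).
Proof. by rewrite /unmix_mx mul_diag_mx !mxE. Qed.

Lemma unmix_mixK (W D : 'M[R]_p) : (1%:M - W) \in unitmx ->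
  (forall i, 0 < D i i) -> unmix_mx W D *m mix_mx W D = 1%:M.
Proof.
move=> W_unit D_pos; rewrite /unmix_mx /mix_mx mulmxA -(mulmxA _ _ (invmx _)).
by rewrite mulmxV // mulmx1 mulmx1C // diag_sqrtK.
Qed.

End Model.

Theorem lemma1 (R : realType) (p : nat) (W0 W1 D0 : 'M[R]_p)
    (f0 f1 : 'I_p -> R -> R) :
  model_param W0 D0 f0 ->
  model_param W1 D0 f1 ->
  same_distribution W0 D0 f0 W1 D0 f1 ->
  (forall i j : 'I_p, (i <= j)%N -> W0 i j = 0) ->
  (forall i : 'I_p, W1 i i = 0) ->
  W0 = W1.
Proof.
move=> par0 par1 /(_ 0%Z); rewrite !acvfY0 // => gram W0_lt W1_diag.
have [[W0_unit _ D0_pos _] [W1_unit _ _ _]] := (par0, par1).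
have [P P_orth unmix1E] := gram_eq_orthogonal_factor
  (unmix_mixK W0_unit D0_pos) (unmix_mixK W1_unit D0_pos) gram.
have unmix0_trig : is_trig_mx (unmix_mx W0 D0).
  apply/is_trig_mxP => i j lt_ij.
  by rewrite unmix_mxE W0_lt ?(ltnW lt_ij) // -val_eqE (ltn_eqF lt_ij) subrr mulr0.
have unmix0_diag i : unmix_mx W0 D0 i i = (Num.sqrt (D0 i i))^-1.
  by rewrite unmix_mxE eqxx W0_lt // subr0 mulr1.
have P1 : P = 1%:M.
  apply: (orthogonal_trig_diag_eq1 P_orth unmix0_trig) => i.
    by rewrite unmix0_diag invr_neq0 // gt_eqF // sqrtr_gt0.
  by rewrite -unmix1E unmix0_diag unmix_mxE eqxx W1_diag subr0 mulr1.
move: unmix1E; rewrite P1 mul1mx => /(congr1 (mulmx (diag_sqrt D0))).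
by rewrite !mulmxA diag_sqrtK // !mul1mx => /addrI/oppr_inj.
Qed.
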